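(* Let $\Gamma$ be a connected infinite graph whose vertices have uniformly bounded degree. Then $\Gamma$ admits a transitive translation-like action by $\mathbb{Z}$ if and only if $\Gamma$ has at most two ends.
   Context: $\Gamma$ is regarded as a metric space on its vertex set via the path-length metric. For a group $H$ and a metric space $(X,d)$, a right action $*$ of $H$ on $X$ is translation-like if it is free ($x*h=x$ implies $h=1_H$) and for every $h\in H$ the set $\{d(x,x*h): x\in X\}$ is bounded. The number of ends of a connected graph is the supremum, over finite sets $A$ of edges, of the number of infinite connected components of $\Gamma - A$. *)

From Stdlib Require Import ZArith List Arith.
Import ListNotations.
Open Scope Z_scope.

Section Graphs.
Variable V : Type.
Variable adj : V -> V -> Prop.

Inductive walk : nat -> V -> V -> Prop :=
| walk_nil : forall x, walk 0 x x
| walk_cons : forall n x y z, adj x y -> walk n y z -> walk (S n) x z.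

Definition gdist_le (x y : V) (n : nat) : Prop :=
  exists m, (m <= n)%nat /\ walk m x y.

Definition connected_graph : Prop := forall x y : V, exists n, walk n x y.

Definition bounded_degree : Prop :=
  exists D : nat, forall (v : V) (l : list V),
    NoDup l -> (forall w, In w l -> adj v w) -> (length l <= D)%nat.

(* Gamma - A, for a finite set A of (undirected) edges given as a list *)
Definition adj_minus (A : list (V * V)) (u v : V) : Prop :=
  adj u v /\ ~ In (u, v) A /\ ~ In (v, u) A.
End Graphs.

Arguments walk {V} adj _ _ _.
Arguments gdist_le {V} adj _ _ _.
Arguments connected_graph {V} adj.
Arguments bounded_degree {V} adj.
Arguments adj_minus {V} adj A _ _.

Definition infinite_set {V : Type} (P : V -> Prop) : Prop :=
  ~ exists l : list V, forall x, P x -> In x l.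

Definition infinite_type (V : Type) : Prop := infinite_set (fun _ : V => True).

Definition component {V : Type} (adj : V -> V -> Prop) (x : V) : V -> Prop :=
  fun y => exists n, walk adj n x y.

(* number of ends <= 2: for every finite edge set A, Gamma - A has at most
   two infinite connected components, i.e. there are no three vertices lying
   in pairwise distinct infinite components of Gamma - A. *)
Definition at_most_two_ends {V : Type} (adj : V -> V -> Prop) : Prop :=
  forall (A : list (V * V)) (x1 x2 x3 : V),
    infinite_set (component (adj_minus adj A) x1) ->
    infinite_set (component (adj_minus adj A) x2) ->
    infinite_set (component (adj_minus adj A) x3) ->
    ~ component (adj_minus adj A) x1 x2 ->
    ~ component (adj_minus adj A) x1 x3 ->
    ~ component (adj_minus adj A) x2 x3 ->
    False.

Definition right_action_Z {V : Type} (act : V -> Z -> V) : Prop :=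
  (forall x, act x 0 = x) /\
  (forall x g h, act (act x g) h = act x (g + h)).

Definition free_action_Z {V : Type} (act : V -> Z -> V) : Prop :=
  forall x h, act x h = x -> h = 0.

Definition translation_like_Z {V : Type} (adj : V -> V -> Prop)
  (act : V -> Z -> V) : Prop :=
  right_action_Z act /\ free_action_Z act /\
  (forall h : Z, exists B : nat, forall x, gdist_le adj x (act x h) B).

Definition transitive_action_Z {V : Type} (act : V -> Z -> V) : Prop :=
  forall x y : V, exists h : Z, act x h = y.

(* If Z acts transitively and translation-like, the orbit map of a vertex is a
   bijection Z -> V sending consecutive integers to vertices at bounded distance.
   Removing finitely many edges breaks only finitely many of these steps, so every
   infinite component contains one of the two tails of the orbit.

   Conversely it suffices to number V by Z with consecutive vertices at bounded
   distance. We partition V into finite connected pieces indexed by Z whose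
   representatives are at bounded distance, and traverse each piece along a
   Hamiltonian cycle of its cube (steps of length at most 3). The pieces are a finite
   core around a vertex r and one or two rays. A ray exhausts a connected one-ended
   infinite set R next to a seed x: repeatedly move the seed to a neighbour y in R and
   cut off y together with the finite components of R - y; moving towards the first
   vertex of an enumeration of V not yet cut off makes every vertex eventually cut
   off. If V is one-ended, the even and odd pieces of one ray give the two sides;
   otherwise a ball separates V into two infinite components, each one-ended since
   there are at most two ends. Bounded degree makes balls finite. *)

From Stdlib Require Import ZArith List Lia Classical ClassicalEpsilon Cantor.
Import ListNotations.

Definition dec (P : Prop) : bool :=
  if excluded_middle_informative P then true else false.

Lemma dec_true (P : Prop) : dec P = true <-> P.
Proof. unfold dec; destruct (excluded_middle_informative P); split; congruence || tauto. Qed.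

Lemma dec_false (P : Prop) : dec P = false <-> ~ P.
Proof. unfold dec; destruct (excluded_middle_informative P); split; congruence || tauto. Qed.

Lemma exists_least (Q : nat -> Prop) :
  (exists n, Q n) -> exists n, Q n /\ forall m, (m < n)%nat -> ~ Q m.
Proof.
  intros [n Hn]; revert Hn; induction n as [n IH] using (well_founded_induction lt_wf).
  intros Hn; destruct (classic (exists m, (m < n)%nat /\ Q m)) as [[m [Hm Qm]]|H].
  - exact (IH m Hm Qm).
  - exists n; split; [exact Hn|]. intros m Hm Qm; apply H; eauto.
Qed.

(* Consecutive blocks of lengths [len i], placed along Z with block 0 starting at 0. *)
Section Offsets.
Variable len : Z -> Z.
Hypothesis len_pos : forall i, (1 <= len i)%Z.

Fixpoint offset_pos (n : nat) : Z :=
  match n with O => 0%Z | S n => (offset_pos n + len (Z.of_nat n))%Z end.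
Fixpoint offset_neg (n : nat) : Z :=
  match n with O => 0%Z | S n => (offset_neg n - len (- Z.of_nat n - 1))%Z end.

Definition offset (i : Z) : Z :=
  if Z.leb 0 i then offset_pos (Z.to_nat i) else offset_neg (Z.to_nat (- i)).

Lemma offset_succ i : offset (i + 1) = (offset i + len i)%Z.
Proof.
  unfold offset; destruct (Z.leb_spec 0 i) as [Hi|Hi].
  - rewrite (proj2 (Z.leb_le 0 (i + 1))) by lia.
    replace (Z.to_nat (i + 1)) with (S (Z.to_nat i)) by lia; simpl. rewrite Z2Nat.id by lia; auto.
  - replace (Z.to_nat (- i)) with (S (Z.to_nat (- i - 1))) by lia; simpl.
    replace (- Z.of_nat (Z.to_nat (- i - 1)) - 1)%Z with i by lia.
    destruct (Z.leb_spec 0 (i + 1)) as [Hi'|Hi'].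
    + assert (i = -1)%Z by lia; subst; simpl; lia.
    + replace (Z.to_nat (- (i + 1))) with (Z.to_nat (- i - 1)) by lia; lia.
Qed.

Lemma offset_le i j : (i <= j)%Z -> (offset i <= offset j)%Z.
Proof.
  intros H; replace j with (i + Z.of_nat (Z.to_nat (j - i)))%Z by lia.
  induction (Z.to_nat (j - i)) as [|k IH]; [rewrite Z.add_0_r; lia|].
  rewrite Nat2Z.inj_succ, <- Z.add_1_r, Z.add_assoc, offset_succ.
  pose proof (len_pos (i + Z.of_nat k)); lia.
Qed.

Lemma offset_surj m : exists i, (offset i <= m < offset (i + 1))%Z.
Proof.
  assert (H0 : (offset 0 = 0)%Z) by reflexivity.
  assert (Hs : forall i, (offset i + 1 <= offset (i + 1))%Z)
    by (intros i; rewrite offset_succ; pose proof (len_pos i); lia).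
  destruct (Z.le_gt_cases 0 m) as [Hm|Hm].
  - replace m with (Z.of_nat (Z.to_nat m)) by lia.
    induction (Z.to_nat m) as [|n [i Hi]]; [exists 0%Z; specialize (Hs 0%Z); simpl in *; lia|].
    destruct (Z.lt_ge_cases (Z.of_nat (S n)) (offset (i + 1))) as [H|H].
    + exists i; lia.
    + exists (i + 1)%Z; specialize (Hs (i + 1)%Z); lia.
  - replace m with (- Z.of_nat (Z.to_nat (- m)))%Z by lia.
    induction (Z.to_nat (- m)) as [|n [i Hi]]; [exists 0%Z; specialize (Hs 0%Z); simpl in *; lia|].
    destruct (Z.le_gt_cases (offset i) (- Z.of_nat (S n))) as [H|H].
    + exists i; lia.
    + exists (i - 1)%Z; specialize (Hs (i - 1)%Z); replace (i - 1 + 1)%Z with i in * by lia; lia.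
Qed.
End Offsets.
Section Walks.
Variable V : Type.
Variable R : V -> V -> Prop.

Lemma walk_app n m x y z : walk R n x y -> walk R m y z -> walk R (n + m) x z.
Proof. induction 1; intros; simpl; auto. econstructor; eauto. Qed.

Lemma walk_snoc n x y z : walk R n x y -> R y z -> walk R (S n) x z.
Proof.
  intros H1 H2; replace (S n) with (n + 1)%nat by lia.
  eapply walk_app; [exact H1|]. econstructor; [exact H2|constructor].
Qed.

Lemma walk_rev (Rsym : forall a b, R a b -> R b a) n x y : walk R n x y -> walk R n y x.
Proof. induction 1; [constructor|]. eapply walk_snoc; eauto. Qed.
End Walks.

Section Graph.
Variable V : Type.
Variable adj : V -> V -> Prop.
Hypothesis adj_sym : forall x y, adj x y -> adj y x.

Local Notation dist_le := (gdist_le adj).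

Lemma dist_le_refl x k : dist_le x x k.
Proof. exists 0%nat; split; [lia|constructor]. Qed.

Lemma dist_le_adj x y : adj x y -> dist_le x y 1.
Proof. exists 1%nat; split; [lia|]. econstructor; eauto; constructor. Qed.

Lemma dist_le_trans x y z a b : dist_le x y a -> dist_le y z b -> dist_le x z (a + b).
Proof.
  intros [m [Hm H]] [m' [Hm' H']]; exists (m + m')%nat; split; [lia|].
  eapply walk_app; eauto.
Qed.

Lemma dist_le_adj2 a b c : adj a b -> adj b c -> dist_le a c 2.
Proof. intros H1 H2; apply (dist_le_trans a b c 1 1); apply dist_le_adj; auto. Qed.

Lemma dist_le_sym x y a : dist_le x y a -> dist_le y x a.
Proof. intros [m [Hm H]]; exists m; split; auto. apply walk_rev; auto. Qed.

Lemma dist_le_mono x y a b : (a <= b)%nat -> dist_le x y a -> dist_le x y b.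
Proof. intros Hab [m [Hm H]]; exists m; split; [lia|auto]. Qed.

Inductive walk_in (P : V -> Prop) : nat -> V -> V -> Prop :=
| walk_in_nil x : P x -> walk_in P 0 x x
| walk_in_cons n x y z : P x -> adj x y -> walk_in P n y z -> walk_in P (S n) x z.

Definition reach_in (P : V -> Prop) (u v : V) : Prop := exists n, walk_in P n u v.

Lemma walk_in_start P n x y : walk_in P n x y -> P x.
Proof. destruct 1; auto. Qed.

Lemma walk_in_end P n x y : walk_in P n x y -> P y.
Proof. induction 1; auto. Qed.

Lemma walk_in_app P n m x y z : walk_in P n x y -> walk_in P m y z -> walk_in P (n + m) x z.
Proof. induction 1; intros; simpl; auto. econstructor; eauto. Qed.

Lemma walk_in_snoc P n x y z : walk_in P n x y -> adj y z -> P z -> walk_in P (S n) x z.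
Proof.
  intros H1 H2 H3; replace (S n) with (n + 1)%nat by lia.
  eapply walk_in_app; [exact H1|]. econstructor; [exact (walk_in_end _ _ _ _ H1)|exact H2|constructor; auto].
Qed.

Lemma walk_in_rev P n x y : walk_in P n x y -> walk_in P n y x.
Proof. induction 1; [constructor; auto|]. eapply walk_in_snoc; eauto. Qed.

Lemma walk_in_mono (P P' : V -> Prop) n x y :
  (forall v, P v -> P' v) -> walk_in P n x y -> walk_in P' n x y.
Proof. intros HP; induction 1; econstructor; eauto. Qed.

Lemma walk_in_ext (P P' : V -> Prop) n x y :
  (forall v, P v <-> P' v) -> walk_in P n x y -> walk_in P' n x y.
Proof. intros H; apply walk_in_mono; intros v; apply H. Qed.

Lemma walk_in_restrict (P P' : V -> Prop) n u w :
  walk_in P n u w -> (forall z, reach_in P u z -> P' z) -> walk_in P' n u w.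
Proof.
  induction 1 as [x Hx|n x y z Hx Hxy Hw IH]; intros Hz.
  - constructor; apply Hz; exists 0%nat; constructor; auto.
  - econstructor; eauto.
    + apply Hz; exists 0%nat; constructor; auto.
    + apply IH; intros z0 [m Hm]; apply Hz; exists (S m); econstructor; eauto.
Qed.

Lemma walk_in_exit P (Q : V -> Prop) n u z : walk_in P n u z -> Q z -> ~ Q u ->
  exists m y y', (m < n)%nat /\ walk_in (fun v => P v /\ ~ Q v) m u y /\
                 adj y y' /\ Q y' /\ P y'.
Proof.
  induction 1 as [x Hx|n x y z Hx Hxy Hw IH]; intros Hq Hnq; [contradiction|].
  destruct (classic (Q y)) as [Hy|Hy].
  - exists 0%nat, x, y; repeat split; auto; try lia. constructor; auto. eapply walk_in_start; eauto.
  - destruct (IH Hq Hy) as [m [y0 [y1 [Hm [G1 [G2 [G3 G4]]]]]]].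
    exists (S m), y0, y1; repeat split; auto; try lia. econstructor; eauto.
Qed.

Lemma reach_in_refl P u : P u -> reach_in P u u.
Proof. exists 0%nat; constructor; auto. Qed.

Lemma reach_in_trans P u v w : reach_in P u v -> reach_in P v w -> reach_in P u w.
Proof. intros [n H] [m H']; exists (n + m)%nat; eapply walk_in_app; eauto. Qed.

Lemma reach_in_sym P u v : reach_in P u v -> reach_in P v u.
Proof. intros [n H]; exists n; apply walk_in_rev; auto. Qed.

Lemma reach_in_end P u v : reach_in P u v -> P v.
Proof. intros [n H]; eapply walk_in_end; eauto. Qed.

Lemma reach_in_ext (P P' : V -> Prop) u v :
  (forall w, P w <-> P' w) -> reach_in P u v -> reach_in P' u v.
Proof. intros H [n Hn]; exists n; eapply walk_in_ext; eauto. Qed.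

Definition finite_set (A : V -> Prop) : Prop := exists l, forall v, A v -> In v l.

Lemma infinite_set_mono (A B : V -> Prop) :
  (forall v, A v -> B v) -> infinite_set A -> infinite_set B.
Proof. intros H HA [l Hl]; apply HA; exists l; auto. Qed.

Lemma not_infinite_finite (A : V -> Prop) : ~ infinite_set A -> finite_set A.
Proof. exact (NNPP _). Qed.

Lemma infinite_set_inhabited (A : V -> Prop) : infinite_set A -> exists a, A a.
Proof.
  intros H; apply NNPP; intros H'; apply H; exists []. intros v Hv; apply H'; eauto.
Qed.

Lemma infinite_reach_in_start Q v : infinite_set (reach_in Q v) -> Q v.
Proof.
  intros H; destruct (infinite_set_inhabited _ H) as [w [n Hn]]; eapply walk_in_start; eauto.
Qed.

Lemma infinite_reach_in_ext (A B : V -> Prop) x :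
  (forall v, A v <-> B v) -> infinite_set (reach_in A x) -> infinite_set (reach_in B x).
Proof. intros H; apply infinite_set_mono; intros v; apply reach_in_ext; auto. Qed.

Lemma infinite_reach_in_trans Q u z :
  reach_in Q u z -> infinite_set (reach_in Q u) -> infinite_set (reach_in Q z).
Proof.
  intros H; apply infinite_set_mono; intros w Hw.
  eapply reach_in_trans; [apply reach_in_sym|]; eauto.
Qed.

Lemma finite_reach_in_trans Q u z :
  reach_in Q u z -> ~ infinite_set (reach_in Q u) -> ~ infinite_set (reach_in Q z).
Proof.
  intros H H1 H2; apply H1. eapply infinite_reach_in_trans; [apply reach_in_sym|]; eauto.
Qed.

Definition cover_list (A : V -> Prop) : list V :=
  match excluded_middle_informative (finite_set A) with
  | left H => proj1_sig (constructive_indefinite_description _ H)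
  | right _ => []
  end.

Lemma cover_list_spec A : finite_set A -> forall v, A v -> In v (cover_list A).
Proof.
  intros H; unfold cover_list; destruct (excluded_middle_informative _); [|contradiction].
  destruct (constructive_indefinite_description _ _); simpl; auto.
Qed.

Definition enum_set (A : V -> Prop) : list V :=
  nodup (fun x y => excluded_middle_informative (x = y))
        (filter (fun v => dec (A v)) (cover_list A)).

Lemma enum_set_spec A : finite_set A -> NoDup (enum_set A) /\ forall v, In v (enum_set A) <-> A v.
Proof.
  intros H; split; [apply NoDup_nodup|]. intros v; unfold enum_set.
  rewrite nodup_In, filter_In, dec_true. split; [tauto|]. intros; split; auto.
  apply cover_list_spec; auto.
Qed.

Lemma NoDup_incl_length_lt (l l' : list V) x :
  NoDup l -> incl l l' -> In x l' -> ~ In x l -> (length l < length l')%nat.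
Proof.
  intros H1 H2 H3 H4; assert (H : NoDup (x :: l)) by (constructor; auto).
  apply (NoDup_incl_length (l' := l')) in H; [simpl in H; lia|]. intros y [<-|Hy]; auto.
Qed.

(** * Tours of finite connected sets *)

Fixpoint chain (k : nat) (l : list V) : Prop :=
  match l with
  | a :: (b :: _) as t => dist_le a b k /\ chain k t
  | _ => True
  end.

Lemma chain_tail k a l : chain k (a :: l) -> chain k l.
Proof. destruct l; simpl; tauto. Qed.

Lemma chain_snoc_app k l1 a l2 :
  chain k (l1 ++ [a]) -> chain k (a :: l2) -> chain k (l1 ++ a :: l2).
Proof.
  induction l1 as [|x l1 IH]; simpl; auto.
  destruct l1 as [|y l1]; simpl in *; [tauto|].
  intros [H1 H2] H3; split; auto. apply IH; auto.
Qed.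

Lemma chain_rev k l : chain k l -> chain k (rev l).
Proof.
  induction l as [|a [|b t] IH]; simpl; auto.
  intros [H1 H2]; rewrite <- app_assoc; apply chain_snoc_app.
  - exact (IH H2).
  - simpl; split; auto. apply dist_le_sym; auto.
Qed.

Lemma last_cons_default (y : V) l d d' : last (y :: l) d = last (y :: l) d'.
Proof. revert y; induction l as [|z l IH]; intros y; simpl; auto. destruct l; auto. apply (IH z). Qed.

Lemma chain_app k a l1 b l2 :
  chain k (a :: l1) -> chain k (b :: l2) -> dist_le (last (a :: l1) a) b k ->
  chain k ((a :: l1) ++ b :: l2).
Proof.
  revert a; induction l1 as [|x l1 IH]; intros a; simpl; auto.
  intros [H1 H2] H3 H4; split; auto. apply (IH x); auto.
  destruct l1 as [|y l]; auto. simpl in H4 |- *.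
  change (dist_le (last (y :: l) x) b k); rewrite (last_cons_default y l x a); auto.
Qed.

Lemma chain_nth k l p a b :
  chain k l -> nth_error l p = Some a -> nth_error l (S p) = Some b -> dist_le a b k.
Proof.
  revert p; induction l as [|x l IH]; intros p Hc H1 H2; [destruct p; discriminate|].
  destruct p as [|p].
  - destruct l as [|y l]; [discriminate|]. simpl in H1, H2.
    injection H1 as <-; injection H2 as <-. exact (proj1 Hc).
  - exact (IH p (chain_tail _ _ _ Hc) H1 H2).
Qed.

Lemma last_nth_error (l : list V) a d : nth_error l (length l - 1) = Some a -> last l d = a.
Proof.
  intros H; destruct (nth_error_split _ _ H) as [l1 [l2 [-> Hl]]].
  rewrite length_app in Hl; destruct l2; [apply last_last|simpl in Hl; lia].
Qed.

Definition connected_to (G : list V) (v : V) : Prop :=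
  forall u, In u G -> reach_in (fun z => In z G) u v.

(* A Hamiltonian cycle through [v] in the cube of the subgraph spanned by [G]. *)
Record tour (G : list V) (v : V) (L : list V) : Prop := {
  tour_nodup : NoDup L;
  tour_elems : forall z, In z L <-> In z G;
  tour_head : exists t, L = v :: t;
  tour_closes : dist_le (last L v) v 1;
  tour_chain : chain 3 L }.

Lemma tour_singleton G v : (forall z, In z G <-> z = v) -> tour G v [v].
Proof.
  intros HG; split.
  - constructor; [intros []|constructor].
  - intros z; rewrite HG; simpl; intuition.
  - eauto.
  - apply dist_le_refl.
  - exact I.
Qed.

Lemma tour_app G G1 G2 v c L1 L2 :
  tour G1 v L1 -> tour G2 c L2 -> adj v c ->
  (forall z, In z G1 -> ~ In z G2) -> (forall z, In z G <-> In z G1 \/ In z G2) ->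
  tour G v (L1 ++ rev L2).
Proof.
  intros [N1 M1 [t1 E1] La1 Ch1] [N2 M2 [t2 E2] La2 Ch2] Hvc Hdisj HG.
  assert (Hlast2 : last (rev L2) v = c) by (rewrite E2; simpl; apply last_last).
  destruct (rev L2) as [|b r] eqn:Er.
  { apply (f_equal (@length V)) in Er; rewrite length_rev, E2 in Er; discriminate. }
  split.
  - apply NoDup_app; auto.
    + rewrite <- Er; apply NoDup_rev; auto.
    + intros a Ha1 Ha2; rewrite <- Er, <- in_rev in Ha2.
      apply (Hdisj a); [apply M1|apply M2]; auto.
  - intros z; rewrite HG, in_app_iff, <- Er, <- in_rev, M1, M2; tauto.
  - exists (t1 ++ b :: r); rewrite E1; auto.
  - assert (E : last (L1 ++ b :: r) v = last (b :: r) v).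
    { clear; induction L1 as [|x l IH]; simpl; auto. rewrite IH; destruct l; auto. }
    rewrite E, Hlast2. apply dist_le_adj, adj_sym; auto.
  - rewrite E1 in Ch1, La1 |- *. apply chain_app; auto.
    + rewrite <- Er; apply chain_rev; auto.
    + assert (Hb : b = last L2 c).
      { rewrite <- (rev_involutive L2), Er; simpl. rewrite last_last; auto. }
      replace 3%nat with (1 + 1 + 1)%nat by lia.
      apply (dist_le_trans _ c); [apply (dist_le_trans _ v); [exact La1|apply dist_le_adj; auto]|].
      rewrite Hb; apply dist_le_sym; exact La2.
Qed.

Section TourSplit.
Variables (G : list V) (v c : V).
Hypothesis G_nodup : NoDup G.
Hypothesis v_in : In v G.
Hypothesis c_in : In c G.
Hypothesis c_neq : c <> v.
Hypothesis G_connected : connected_to G v.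

Definition split_domain (w : V) : Prop := In w G /\ w <> v.
Definition split_comp : list V := filter (fun z => dec (reach_in split_domain c z)) G.
Definition split_rest : list V := filter (fun z => negb (dec (reach_in split_domain c z))) G.

Lemma in_split_comp z : In z split_comp <-> In z G /\ reach_in split_domain c z.
Proof. unfold split_comp; rewrite filter_In, dec_true; tauto. Qed.

Lemma in_split_rest z : In z split_rest <-> In z G /\ ~ reach_in split_domain c z.
Proof. unfold split_rest; rewrite filter_In, Bool.negb_true_iff, dec_false; tauto. Qed.

Lemma v_in_split_rest : In v split_rest.
Proof. apply in_split_rest; split; auto. intros Hr; apply reach_in_end in Hr; apply Hr; auto. Qed.

Lemma c_in_split_comp : In c split_comp.
Proof. apply in_split_comp; split; auto. apply reach_in_refl; split; auto. Qed.

Lemma split_comp_shorter : (length split_comp < length G)%nat.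
Proof.
  apply (NoDup_incl_length_lt _ _ v); auto.
  - apply NoDup_filter; auto.
  - intros z Hz; apply in_split_comp in Hz; tauto.
  - intros Hz; apply in_split_comp, proj2, reach_in_end in Hz; apply Hz; auto.
Qed.

Lemma split_rest_shorter : (length split_rest < length G)%nat.
Proof.
  apply (NoDup_incl_length_lt _ _ c); auto.
  - apply NoDup_filter; auto.
  - intros z Hz; apply in_split_rest in Hz; tauto.
  - intros Hz; apply in_split_rest, proj2 in Hz; apply Hz, reach_in_refl; split; auto.
Qed.

Lemma split_comp_connected : connected_to split_comp c.
Proof.
  intros z Hz; apply in_split_comp in Hz; destruct Hz as [HzG [k Hk]].
  exists k; eapply walk_in_restrict; [apply walk_in_rev; exact Hk|].
  intros w Hw; apply in_split_comp; split.
  - apply reach_in_end in Hw; apply Hw.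
  - eapply reach_in_trans; [exists k; exact Hk|exact Hw].
Qed.

Lemma split_rest_connected : connected_to split_rest v.
Proof.
  intros z Hz; destruct (classic (z = v)) as [->|Hzv]; [apply reach_in_refl; exact Hz|].
  apply in_split_rest in Hz; destruct Hz as [HzG Hnc].
  destruct (G_connected z HzG) as [k Hk].
  destruct (walk_in_exit _ (fun w => w = v) _ _ _ Hk eq_refl Hzv)
    as [k1 [y [y' [_ [Hry [Hay [-> _]]]]]]].
  exists (S k1); eapply walk_in_snoc; [|exact Hay|exact v_in_split_rest].
  eapply walk_in_restrict; [exact Hry|]. intros w Hw; apply in_split_rest; split.
  - apply reach_in_end in Hw; apply Hw.
  - intros Hcw; apply Hnc. eapply reach_in_trans; [exact Hcw|apply reach_in_sym; exact Hw].
Qed.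

Lemma split_disjoint z : In z split_rest -> ~ In z split_comp.
Proof. rewrite in_split_rest, in_split_comp; tauto. Qed.

Lemma split_cover z : In z G <-> In z split_rest \/ In z split_comp.
Proof.
  rewrite in_split_rest, in_split_comp.
  split; [|tauto]. intros Hz; destruct (classic (reach_in split_domain c z)); tauto.
Qed.
End TourSplit.

Lemma tour_exists G v : NoDup G -> In v G -> connected_to G v -> exists L, tour G v L.
Proof.
  remember (length G) as n eqn:En; revert G v En.
  induction n as [n IH] using (well_founded_induction lt_wf); intros G v En Hnd Hv Hc.
  destruct (classic (exists u, In u G /\ u <> v)) as [[u [Hu Huv]]|Hall].
  2:{ exists [v]; apply tour_singleton. intros z; split; [|intros ->; auto].
      intros Hz; apply NNPP; intros Hzv; apply Hall; eauto. }
  (* [c] is a neighbour of [v] on a walk from [u] to [v] inside [G] *)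
  destruct (Hc u Hu) as [m Hm].
  destruct (walk_in_exit _ (fun w => w = v) _ _ _ Hm eq_refl Huv)
    as [m1 [c [v' [_ [Hrc [Hadj [-> _]]]]]]].
  assert (HcG : In c G /\ c <> v) by exact (walk_in_end _ _ _ _ Hrc).
  destruct HcG as [HcG Hcv].
  destruct (IH (length (split_rest G v c))) with (G := split_rest G v c) (v := v)
    as [L1 T1]; auto.
  { subst n; apply split_rest_shorter; auto. }
  { apply NoDup_filter; auto. }
  { apply v_in_split_rest; auto. }
  { apply split_rest_connected; auto. }
  destruct (IH (length (split_comp G v c))) with (G := split_comp G v c) (v := c)
    as [L2 T2]; auto.
  { subst n; apply split_comp_shorter; auto. }
  { apply NoDup_filter; auto. }
  { apply c_in_split_comp; auto. }
  { apply split_comp_connected; auto. }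
  exists (L1 ++ rev L2). eapply tour_app; [exact T1|exact T2|apply adj_sym; exact Hadj|..].
  - apply split_disjoint.
  - apply split_cover.
Qed.

(** * Balls in a graph of bounded degree *)

Hypothesis adj_bounded : bounded_degree adj.

Lemma neighbours_exist v : exists l, forall w, adj v w <-> In w l.
Proof.
  destruct adj_bounded as [D HD]; apply NNPP; intros Hn.
  assert (H : forall k, exists l, NoDup l /\ (forall w, In w l -> adj v w) /\ length l = k).
  { induction k as [|k [l [Hl1 [Hl2 Hl3]]]].
    - exists []; repeat split; [constructor|intros w []].
    - assert (Hw : exists w, adj v w /\ ~ In w l).
      { apply NNPP; intros H; apply Hn; exists l; intros w; split; [|auto].
        intros Ha; apply NNPP; intros Hw; apply H; eauto. }
      destruct Hw as [w [Hw1 Hw2]]; exists (w :: l); repeat split.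
      + constructor; auto.
      + intros z [<-|Hz]; auto.
      + simpl; lia. }
  destruct (H (S D)) as [l [H1 [H2 H3]]]. specialize (HD v l H1 H2); lia.
Qed.

Definition neighbours v : list V :=
  proj1_sig (constructive_indefinite_description _ (neighbours_exist v)).

Lemma in_neighbours v w : adj v w <-> In w (neighbours v).
Proof. unfold neighbours; destruct (constructive_indefinite_description _ _); simpl; auto. Qed.

Fixpoint ball (x : V) (n : nat) : list V :=
  match n with
  | O => [x]
  | S n => x :: flat_map (fun y => ball y n) (neighbours x)
  end.

Lemma ball_center x n : In x (ball x n).
Proof. destruct n; simpl; auto. Qed.

Lemma ball_mono_S n : forall x z, In z (ball x n) -> In z (ball x (S n)).
Proof.
  induction n as [|n IH]; intros x z H; simpl in H.
  - destruct H as [<-|[]]; apply ball_center.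
  - destruct H as [<-|H]; [apply ball_center|].
    apply in_flat_map in H; destruct H as [y [Hy Hz]].
    right; apply in_flat_map; eauto.
Qed.

Lemma ball_mono n m x z : (n <= m)%nat -> In z (ball x n) -> In z (ball x m).
Proof. induction 1; auto using ball_mono_S. Qed.

Lemma in_ball_walk n x z : walk adj n x z -> In z (ball x n).
Proof.
  induction 1; [apply ball_center|].
  simpl; right; apply in_flat_map. exists y; split; auto. apply in_neighbours; auto.
Qed.

Lemma in_ball_dist x z n : dist_le x z n -> In z (ball x n).
Proof. intros [m [Hm H]]; eapply ball_mono; eauto. apply in_ball_walk; auto. Qed.

Lemma dist_in_ball n : forall x z, In z (ball x n) -> dist_le x z n.
Proof.
  induction n as [|n IH]; intros x z H; simpl in H.
  - destruct H as [<-|[]]; apply dist_le_refl.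
  - destruct H as [<-|H]; [apply dist_le_refl|].
    apply in_flat_map in H; destruct H as [y [Hy Hz]].
    replace (S n) with (1 + n)%nat by lia.
    eapply dist_le_trans; [apply dist_le_adj, in_neighbours; eauto|apply IH; auto].
Qed.

Lemma ball_connected n : forall x, connected_to (ball x n) x.
Proof.
  induction n as [|n IH]; intros x z H; simpl in H.
  - destruct H as [<-|[]]; apply reach_in_refl; simpl; auto.
  - destruct H as [<-|H]; [apply reach_in_refl, ball_center|].
    apply in_flat_map in H; destruct H as [y [Hy Hz]].
    destruct (IH y z Hz) as [m Hm]; exists (S m).
    eapply walk_in_snoc; [|apply adj_sym, in_neighbours; exact Hy|apply ball_center].
    eapply walk_in_mono; [|exact Hm]. intros w Hw; simpl; right; apply in_flat_map; eauto.
Qed.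

Lemma finite_near (E : list V) N : finite_set (fun z => exists e, In e E /\ dist_le z e N).
Proof.
  exists (flat_map (fun e => ball e N) E); intros z [e [He Hz]].
  apply in_flat_map; exists e; split; auto. apply in_ball_dist, dist_le_sym; auto.
Qed.

Lemma ball_covers (Hconn : connected_graph adj) (S : list V) x :
  exists N, forall s, In s S -> In s (ball x N).
Proof.
  induction S as [|s S [N HN]]; [exists 0%nat; intros s []|].
  destruct (Hconn x s) as [n Hn]; exists (N + n)%nat; intros s' [<-|Hs'].
  - eapply ball_mono; [|apply in_ball_walk; eauto]; lia.
  - eapply ball_mono; [|apply HN; auto]; lia.
Qed.

Lemma vertex_enumeration (Hconn : connected_graph adj) (r : V) :
  exists e : nat -> V, forall v, exists k, e k = v.
Proof.
  exists (fun k => let p := Cantor.of_nat k in nth (snd p) (ball r (fst p)) r).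
  intros v; destruct (Hconn r v) as [n Hn]; apply in_ball_walk in Hn.
  destruct (In_nth _ _ r Hn) as [i [_ Hi]].
  exists (Cantor.to_nat (n, i)); rewrite Cantor.cancel_of_to; auto.
Qed.

(** * Ends and vertex cuts *)

Definition edges_from (S : list V) : list (V * V) :=
  flat_map (fun s => map (fun w => (s, w)) (neighbours s)) S.

Lemma in_edges_from S a b : In (a, b) (edges_from S) <-> In a S /\ adj a b.
Proof.
  unfold edges_from; rewrite in_flat_map, in_neighbours; split.
  - intros [s [Hs H]]; apply in_map_iff in H; destruct H as [w [E Hw]].
    injection E as <- <-; auto.
  - intros [Ha Hab]; exists a; split; auto. apply in_map_iff; eauto.
Qed.

Definition full (_ : V) : Prop := True.
Definition minus (P : V -> Prop) (X : list V) (v : V) : Prop := P v /\ ~ In v X.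

Lemma component_edges_from S x y : ~ In x S ->
  component (adj_minus adj (edges_from S)) x y <-> reach_in (minus full S) x y.
Proof.
  intros Hx; split.
  - intros [n Hn]; exists n; revert Hx.
    induction Hn as [x|n x y' z [Ha [H1 H2]] Hw IH]; intros Hx.
    + constructor; split; [exact I|auto].
    + econstructor; [split; [exact I|auto]|exact Ha|].
      apply IH; intros Hy; apply H2, in_edges_from; auto.
  - intros [n Hn]; exists n; clear Hx.
    induction Hn as [x [_ Hx']|n x y' z [_ Hx'] Ha Hr IH]; [constructor|].
    destruct (walk_in_start _ _ _ _ Hr) as [_ Hy].
    econstructor; [|exact IH]. split; auto. rewrite !in_edges_from; tauto.
Qed.

Lemma two_ends_vertex_cut (Hends : at_most_two_ends adj) (S : list V) a b c :
  infinite_set (reach_in (minus full S) a) -> infinite_set (reach_in (minus full S) b) ->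
  infinite_set (reach_in (minus full S) c) ->
  ~ reach_in (minus full S) a b -> ~ reach_in (minus full S) a c ->
  ~ reach_in (minus full S) b c -> False.
Proof.
  intros Ia Ib Ic Nab Nac Nbc.
  pose proof (proj2 (infinite_reach_in_start _ _ Ia)) as Ha.
  pose proof (proj2 (infinite_reach_in_start _ _ Ib)) as Hb.
  pose proof (proj2 (infinite_reach_in_start _ _ Ic)) as Hc.
  apply (Hends (edges_from S) a b c).
  - eapply infinite_set_mono; [|exact Ia]; intros v Hv; apply component_edges_from; auto.
  - eapply infinite_set_mono; [|exact Ib]; intros v Hv; apply component_edges_from; auto.
  - eapply infinite_set_mono; [|exact Ic]; intros v Hv; apply component_edges_from; auto.
  - rewrite component_edges_from; auto.
  - rewrite component_edges_from; auto.
  - rewrite component_edges_from; auto.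
Qed.

(** * Infinite parts of one-ended sets *)

Definition connected_in (P : V -> Prop) : Prop := forall u w, P u -> P w -> reach_in P u w.

Definition one_ended_in (P : V -> Prop) : Prop :=
  forall (S : list V) u w,
    infinite_set (reach_in (minus P S) u) -> infinite_set (reach_in (minus P S) w) ->
    reach_in (minus P S) u w.

Definition inf_part (P : V -> Prop) (X : list V) (v : V) : Prop :=
  infinite_set (reach_in (minus P X) v).

Definition fin_part (P : V -> Prop) (X : list V) (v : V) : Prop := P v /\ ~ inf_part P X v.

Definition reaches (P : V -> Prop) (X : list V) : Prop :=
  forall v, P v -> exists x, In x X /\ reach_in P v x.

Lemma connected_in_full : connected_graph adj -> connected_in full.
Proof.
  intros Hc u w _ _; destruct (Hc u w) as [n Hn]; exists n.
  clear - Hn; induction Hn; econstructor; eauto; exact I.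
Qed.

Lemma reach_in_connected P u : connected_in (reach_in P u).
Proof.
  intros a b Ha Hb; destruct (reach_in_trans _ _ _ _ (reach_in_sym _ _ _ Ha) Hb) as [n Hn].
  exists n; eapply walk_in_restrict; [exact Hn|]. intros z Hz; exact (reach_in_trans _ _ _ _ Ha Hz).
Qed.

Lemma inf_part_minus P X v : inf_part P X v -> minus P X v.
Proof. apply infinite_reach_in_start. Qed.

Lemma inf_part_reach P X u v : inf_part P X u -> reach_in (minus P X) u v -> inf_part P X v.
Proof. intros Hu H; eapply infinite_reach_in_trans; eauto. Qed.

(* Each finite component of [P - X] contains a neighbour of [X]. *)
Lemma union_finite_components_finite P X : reaches P X ->
  finite_set (fun v => minus P X v /\ ~ infinite_set (reach_in (minus P X) v)).
Proof.
  intros Hc.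
  exists (flat_map (fun x => flat_map (fun y => cover_list (reach_in (minus P X) y))
                                       (neighbours x)) X).
  intros v [[Pv Xv] Hf]; destruct (Hc v Pv) as [x [Hx [m Hm]]].
  destruct (walk_in_exit _ (fun w => In w X) _ _ _ Hm Hx Xv) as [k [y [y' [_ [Hr [Ha [Hy' _]]]]]]].
  apply in_flat_map; exists y'; split; auto.
  apply in_flat_map; exists y; split; [apply in_neighbours, adj_sym; auto|].
  apply cover_list_spec.
  - apply not_infinite_finite; eapply finite_reach_in_trans; [|exact Hf]. exists k; exact Hr.
  - exists k; apply walk_in_rev; exact Hr.
Qed.

Lemma fin_part_finite P X : reaches P X -> finite_set (fin_part P X).
Proof.
  intros Hc; destruct (union_finite_components_finite P X Hc) as [l Hl]; exists (X ++ l).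
  intros v [Pv Hn]; apply in_or_app; destruct (classic (In v X)) as [H|H]; auto.
  right; apply Hl; repeat split; auto.
Qed.

Lemma inf_part_infinite P X : finite_set (fin_part P X) -> infinite_set P -> infinite_set (inf_part P X).
Proof.
  intros [l Hl] HP [l' Hl']; apply HP; exists (l ++ l'); intros v Pv; apply in_or_app.
  destruct (classic (inf_part P X v)); [right|left]; auto. apply Hl; split; auto.
Qed.

Lemma walk_in_inf_part P X u w n :
  inf_part P X u -> walk_in (minus P X) n u w -> walk_in (inf_part P X) n u w.
Proof.
  intros Hu H; eapply walk_in_restrict; [exact H|]. intros z Hz; eapply inf_part_reach; eauto.
Qed.

Lemma inf_part_connected P X : one_ended_in P -> connected_in (inf_part P X).
Proof.
  intros Hoe u w Hu Hw; destruct (Hoe X u w Hu Hw) as [n Hn].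
  exists n; apply walk_in_inf_part; auto.
Qed.

Lemma inf_part_one_ended P X : one_ended_in P -> finite_set (fin_part P X) ->
  one_ended_in (inf_part P X).
Proof.
  intros Hoe Hf S u w Iu Iw.
  destruct (enum_set_spec (fin_part P X) Hf) as [_ Hex].
  (* [inf_part P X - S] is [P] minus the finite list [enum_set (fin_part P X) ++ S] *)
  assert (E : forall v, minus (inf_part P X) S v <-> minus P (enum_set (fin_part P X) ++ S) v).
  { intros v; unfold minus; rewrite in_app_iff, Hex; unfold fin_part; split.
    - intros [Hi Hs]; split; [exact (proj1 (inf_part_minus _ _ _ Hi))|tauto].
    - intros [Pv H]; split; [|tauto]. apply NNPP; intros Hn; apply H; left; split; auto. }
  apply (reach_in_ext _ _ _ _ (fun v => iff_sym (E v))), Hoe.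
  - eapply infinite_reach_in_ext; [exact E|exact Iu].
  - eapply infinite_reach_in_ext; [exact E|exact Iw].
Qed.

Lemma fin_part_connected P X x0 : connected_in P -> In x0 X -> (forall x, In x X -> P x) ->
  connected_to X x0 -> forall v, fin_part P X v -> reach_in (fin_part P X) v x0.
Proof.
  intros Hc Hx0 HXP HX v [Pv Hv].
  assert (XW : forall z, In z X -> fin_part P X z).
  { intros z Hz; split; auto. intros H; apply (inf_part_minus _ _ _ H); auto. }
  destruct (classic (In v X)) as [Hin|Hnin].
  - destruct (HX v Hin) as [m Hm]; exists m; eapply walk_in_mono; [|exact Hm]; auto.
  - destruct (Hc v x0 Pv (HXP _ Hx0)) as [m Hm].
    destruct (walk_in_exit _ (fun w => In w X) _ _ _ Hm Hx0 Hnin)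
      as [k [y [y' [_ [Hr [Ha [Hy' _]]]]]]].
    destruct (HX y' Hy') as [m' Hm'].
    exists (S k + m')%nat; eapply walk_in_app; [|eapply walk_in_mono; [|exact Hm']; auto].
    eapply walk_in_snoc; [|exact Ha|auto].
    eapply walk_in_restrict; [exact Hr|]. intros z Hz; split.
    + apply reach_in_end in Hz; apply Hz.
    + intros Hi; apply Hv. eapply inf_part_reach; [exact Hi|apply reach_in_sym; exact Hz].
Qed.

Lemma inf_part_boundary P X x0 : connected_in P -> In x0 X -> P x0 -> forall a, inf_part P X a ->
  exists z y', inf_part P X z /\ In y' X /\ adj y' z /\ reach_in (minus P X) a z.
Proof.
  intros Hc Hx0 Px0 a Ha; destruct (inf_part_minus _ _ _ Ha) as [Pa Xa].
  destruct (Hc a x0 Pa Px0) as [m Hm].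
  destruct (walk_in_exit _ (fun w => In w X) _ _ _ Hm Hx0 Xa) as [k [y [y' [_ [Hr [Hay [Hy' _]]]]]]].
  exists y, y'; repeat split; auto.
  - eapply inf_part_reach; [exact Ha|exists k; exact Hr].
  - exists k; exact Hr.
Qed.

Lemma inf_part_exists Q T : connected_in Q -> infinite_set Q -> exists v, inf_part Q T v.
Proof.
  intros Hc Hi; destruct (infinite_set_inhabited _ Hi) as [q Hq].
  assert (Hf : finite_set (fin_part Q (q :: T))).
  { apply fin_part_finite; intros v Hv; exists q; split; [left; auto|apply Hc; auto]. }
  destruct (infinite_set_inhabited _ (inf_part_infinite _ _ Hf Hi)) as [v Hv].
  exists v; eapply infinite_set_mono; [|exact Hv].
  intros z [n Hn]; exists n; eapply walk_in_mono; [|exact Hn].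
  intros w [Hw1 Hw2]; split; [exact Hw1|intros H; apply Hw2; right; exact H].
Qed.

(** * Exhausting a one-ended set by finite connected pieces *)

Record partition {I : Type} (P : V -> Prop) (C : I -> list V) (rp : I -> V) : Prop := {
  part_nodup : forall i, NoDup (C i);
  part_rep : forall i, In (rp i) (C i);
  part_connected : forall i, connected_to (C i) (rp i);
  part_disjoint : forall i j v, In v (C i) -> In v (C j) -> i = j;
  part_cover : forall v, P v <-> exists i, In v (C i) }.

Record seed (R : V -> Prop) (x : V) : Prop := {
  seed_connected : connected_in R;
  seed_infinite : infinite_set R;
  seed_one_ended : one_ended_in R;
  seed_out : ~ R x;
  seed_adj : exists a, R a /\ adj x a }.

Lemma seed_inf_part R y : connected_in R -> infinite_set R -> one_ended_in R -> R y ->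
  seed (inf_part R [y]) y.
Proof.
  intros Hc Hi Hoe Ry.
  assert (Hf : finite_set (fin_part R [y])).
  { apply fin_part_finite; intros v Rv; exists y; split; [left; auto|apply Hc; auto]. }
  split.
  - apply inf_part_connected; auto.
  - apply inf_part_infinite; auto.
  - apply inf_part_one_ended; auto.
  - intros H; apply (inf_part_minus _ _ _ H); left; auto.
  - destruct (infinite_set_inhabited _ (inf_part_infinite _ _ Hf Hi)) as [b Hb].
    destruct (inf_part_boundary R [y] y Hc (or_introl eq_refl) Ry b Hb)
      as [z [y' [Hz [[<-|[]] [Hyz _]]]]]; eauto.
Qed.

Definition route (R : V -> Prop) (x t : V) (n : nat) : Prop :=
  exists y, R y /\ adj x y /\ walk_in R n y t.

Record peel (R : V -> Prop) (x t : V) (R' : V -> Prop) (x' : V) : Prop := {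
  peel_seed : seed R' x';
  peel_sub : forall v, R' v -> R v;
  peel_adj : adj x x';
  peel_in : R x';
  peel_finite : finite_set (fun v => R v /\ ~ R' v);
  peel_connected : forall v, R v /\ ~ R' v -> reach_in (fun w => R w /\ ~ R' w) v x';
  peel_route : forall n, route R x t n -> R' t -> exists k, (k < n)%nat /\ route R' x' t k }.

(* After its last visit to [y], a walk from [y] to [t] stays in the component of [t]. *)
Lemma route_shortens R y t n : inf_part R [y] t -> walk_in R n y t ->
  exists k, (k < n)%nat /\ route (inf_part R [y]) y t k.
Proof.
  intros Rt' Hyt.
  assert (Hty : ~ In t [y]) by exact (proj2 (inf_part_minus _ _ _ Rt')).
  destruct (walk_in_exit _ (fun w => In w [y]) _ _ _ (walk_in_rev _ _ _ _ Hyt) (or_introl eq_refl) Hty)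
    as [k [z [y' [Hk [Hr [Hzy [[<-|[]] _]]]]]]].
  exists k; split; [exact Hk|]. exists z; split; [|split].
  - eapply inf_part_reach; [exact Rt'|exists k; exact Hr].
  - apply adj_sym; auto.
  - apply walk_in_rev, walk_in_inf_part; auto.
Qed.

Lemma peel_exists R x t : seed R x -> exists R' x', peel R x t R' x'.
Proof.
  intros HI; destruct HI as [Hc Hi Hoe Hx [a [Ra Ha]]].
  assert (Ht : exists t', R t' /\ (R t -> t' = t)).
  { destruct (classic (R t)) as [H|H]; [exists t; auto|].
    destruct (infinite_set_inhabited _ Hi) as [b Hb]; exists b; split; tauto. }
  destruct Ht as [t' [Rt' Ht']].
  destruct (exists_least (route R x t')) as [n0 [[y [Ry [Hxy Hyt]]] Hmin]].
  { destruct (Hc a t' Ra Rt') as [m Hm]; exists m, a; auto. }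
  assert (Hf : finite_set (fin_part R [y])).
  { apply fin_part_finite; intros v Rv; exists y; split; [left; auto|apply Hc; auto]. }
  exists (inf_part R [y]), y; split.
  - apply seed_inf_part; auto.
  - intros v Hv; exact (proj1 (inf_part_minus _ _ _ Hv)).
  - exact Hxy.
  - exact Ry.
  - exact Hf.
  - intros v Hv. apply (fin_part_connected R [y] y Hc (or_introl eq_refl)); auto.
    + intros x0 [<-|[]]; auto.
    + intros x0 [<-|[]]; apply reach_in_refl; left; auto.
  - intros n Hn Rt. assert (Rt0 : R t) by (destruct Hn as [? [_ [_ H]]]; eapply walk_in_end; eauto).
    rewrite <- (Ht' Rt0) in Rt |- *.
    destruct (route_shortens R y t' n0 Rt Hyt) as [k [Hk Hroute]].
    exists k; split; [|exact Hroute].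
    destruct (Nat.le_gt_cases n0 n) as [Hle|Hlt]; [lia|].
    rewrite <- (Ht' Rt0) in Hn. exfalso; eapply Hmin; eauto.
Qed.

Record state := mk_state { st_set : V -> Prop; st_seed : V; st_index : nat }.

(* The target of a step is the first vertex of the enumeration not yet removed;
   the index moves on once the current target has been removed. *)
Record step (e : nat -> V) (s s' : state) : Prop := {
  step_peel : peel (st_set s) (st_seed s) (e (st_index s)) (st_set s') (st_seed s');
  step_index : st_index s' =
    if dec (st_set s' (e (st_index s))) then st_index s else S (st_index s) }.

Lemma step_exists e s : seed (st_set s) (st_seed s) -> exists s', step e s s'.
Proof.
  intros HI; destruct (peel_exists _ _ (e (st_index s)) HI) as [R' [x' HP]].
  exists (mk_state R' x' (if dec (R' (e (st_index s))) then st_index s else S (st_index s))).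
  split; auto.
Qed.

Section Exhaustion.
Variable e : nat -> V.
Hypothesis e_surj : forall v, exists k, e k = v.
Variables (R : V -> Prop) (s : V).
Hypothesis R_seed : seed R s.

Definition next (t : state) : state :=
  match excluded_middle_informative (exists t', step e t t') with
  | left H => proj1_sig (constructive_indefinite_description _ H)
  | right _ => t
  end.

Fixpoint states (j : nat) : state :=
  match j with O => mk_state R s 0 | S j => next (states j) end.

Lemma next_step t : seed (st_set t) (st_seed t) -> step e t (next t).
Proof.
  intros HI; unfold next; destruct (excluded_middle_informative _) as [H|H].
  - destruct (constructive_indefinite_description _ H); auto.
  - exfalso; apply H, step_exists, HI.
Qed.

Lemma states_seed j : seed (st_set (states j)) (st_seed (states j)).
Proof. induction j as [|j IH]; [exact R_seed|exact (peel_seed _ _ _ _ _ (step_peel _ _ _ (next_step _ IH)))]. Qed.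

Lemma states_step j : step e (states j) (states (S j)).
Proof. apply next_step, states_seed. Qed.

Lemma states_peel j :
  peel (st_set (states j)) (st_seed (states j)) (e (st_index (states j)))
       (st_set (states (S j))) (st_seed (states (S j))).
Proof. apply states_step. Qed.

Lemma states_antitone j j' v : (j <= j')%nat -> st_set (states j') v -> st_set (states j) v.
Proof. induction 1; auto. intros Hv; apply IHle, (peel_sub _ _ _ _ _ (states_peel m)), Hv. Qed.

Lemma index_removed j k : (k < st_index (states j))%nat -> ~ st_set (states j) (e k).
Proof.
  induction j as [|j IH]; intros Hk; [simpl in Hk; lia|].
  pose proof (peel_sub _ _ _ _ _ (states_peel j)) as Hsub.
  rewrite (step_index _ _ _ (states_step j)) in Hk.
  destruct (dec (st_set (states (S j)) (e (st_index (states j))))) eqn:D.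
  - intros H; apply (IH Hk), Hsub, H.
  - rewrite dec_false in D. destruct (Nat.eq_dec k (st_index (states j))) as [->|Hne]; auto.
    intros H; apply (IH ltac:(lia)), Hsub, H.
Qed.

(* Termination: while the target survives, the length of a shortest route to it drops. *)
Lemma index_progress j : exists j', (st_index (states j) < st_index (states j'))%nat.
Proof.
  destruct (classic (st_set (states j) (e (st_index (states j))))) as [Hr|Hr].
  2:{ exists (S j); rewrite (step_index _ _ _ (states_step j)).
      destruct (dec (st_set (states (S j)) (e (st_index (states j))))) eqn:D; [|lia].
      rewrite dec_true in D.
      exfalso; apply Hr, (peel_sub _ _ _ _ _ (states_peel j)), D. }
  destruct (states_seed j) as [Hc _ _ _ [a [Ra Ha]]].
  destruct (Hc a _ Ra Hr) as [n Hn].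
  assert (H : route (st_set (states j)) (st_seed (states j)) (e (st_index (states j))) n)
    by (exists a; auto).
  clear Hn Ra Ha Hc Hr; revert j H.
  induction n as [n IH] using (well_founded_induction lt_wf); intros j H.
  pose proof (step_index _ _ _ (states_step j)) as E.
  destruct (classic (st_set (states (S j)) (e (st_index (states j))))) as [Hr|Hr].
  - destruct (peel_route _ _ _ _ _ (states_peel j) n H Hr) as [m [Hm Hm']].
    assert (Ek : st_index (states (S j)) = st_index (states j))
      by (rewrite E, (proj2 (dec_true _) Hr); auto).
    rewrite <- Ek in Hm'. destruct (IH m Hm (S j) Hm') as [j' Hj']. exists j'; lia.
  - exists (S j); rewrite E, (proj2 (dec_false _) Hr); lia.
Qed.

Lemma states_exhaust v : R v -> exists j, st_set (states j) v /\ ~ st_set (states (S j)) v.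
Proof.
  intros H0; destruct (e_surj v) as [k <-].
  assert (Hj : exists j, (S k <= st_index (states j))%nat).
  { induction (S k) as [|K [j Hj]]; [exists 0%nat; lia|].
    destruct (index_progress j) as [j' Hj']; exists j'; lia. }
  destruct Hj as [j Hj].
  assert (G : ~ st_set (states j) (e k)) by (apply index_removed; lia).
  clear Hj; induction j as [|j IH]; [contradiction|].
  destruct (classic (st_set (states j) (e k))) as [Hin|Hout]; eauto.
Qed.

Definition layer (j : nat) (v : V) : Prop := st_set (states j) v /\ ~ st_set (states (S j)) v.
Definition piece (j : nat) : list V := enum_set (layer j).

Lemma piece_spec j : NoDup (piece j) /\ forall v, In v (piece j) <-> layer j v.
Proof. apply enum_set_spec, (peel_finite _ _ _ _ _ (states_peel j)). Qed.

Lemma exhaustion_partition : partition R piece (fun j => st_seed (states (S j))).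
Proof.
  split.
  - intros j; apply piece_spec.
  - intros j; apply piece_spec; split.
    + exact (peel_in _ _ _ _ _ (states_peel j)).
    + exact (seed_out _ _ (peel_seed _ _ _ _ _ (states_peel j))).
  - intros j v Hv; apply piece_spec in Hv.
    eapply reach_in_ext; [|exact (peel_connected _ _ _ _ _ (states_peel j) v Hv)].
    intros z; symmetry; apply piece_spec.
  - intros j j' v H1 H2; apply piece_spec in H1; apply piece_spec in H2.
    destruct (Nat.lt_total j j') as [Hl|[Hl|Hl]]; auto; exfalso.
    + apply (proj2 H1), (states_antitone (S j) j'); [lia|apply H2].
    + apply (proj2 H2), (states_antitone (S j') j); [lia|apply H1].
  - intros v; split.
    + intros H; destruct (states_exhaust v H) as [j Hj]; exists j; apply piece_spec; auto.
    + intros [j Hj]; apply piece_spec in Hj. apply (states_antitone 0 j); [lia|apply Hj].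
Qed.
End Exhaustion.

Lemma seed_ray (e : nat -> V) (e_surj : forall v, exists k, e k = v) R s : seed R s ->
  exists (W : nat -> list V) (x : nat -> V),
    partition R W x /\ adj s (x 0%nat) /\ forall j, adj (x j) (x (S j)).
Proof.
  intros HI; exists (piece e R s), (fun j => st_seed (states e R s (S j))); split; [|split].
  - apply exhaustion_partition; auto.
  - exact (peel_adj _ _ _ _ _ (states_peel e R s HI 0)).
  - intros j; exact (peel_adj _ _ _ _ _ (states_peel e R s HI (S j))).
Qed.

(** * From a linear partition into finite connected pieces to a Z-action *)

Section Assembly.
Variables (W : Z -> list V) (x : Z -> V) (K : nat).
Hypothesis W_part : partition full W x.
Hypothesis x_step : forall i, dist_le (x i) (x (i + 1)) K.

Lemma piece_tour_exists i : exists L, tour (W i) (x i) L.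
Proof.
  apply tour_exists; [apply (part_nodup _ _ _ W_part)|apply (part_rep _ _ _ W_part)|].
  apply (part_connected _ _ _ W_part).
Qed.

Definition piece_tour (i : Z) : list V :=
  proj1_sig (constructive_indefinite_description _ (piece_tour_exists i)).

Lemma piece_tour_spec i : tour (W i) (x i) (piece_tour i).
Proof. unfold piece_tour; destruct (constructive_indefinite_description _ _); auto. Qed.

Definition tour_len (i : Z) : Z := Z.of_nat (length (piece_tour i)).

Lemma tour_len_pos i : (1 <= tour_len i)%Z.
Proof. unfold tour_len; destruct (tour_head _ _ _ (piece_tour_spec i)) as [t ->]; simpl; lia. Qed.

Lemma piece_index_exists v : exists i, In v (piece_tour i).
Proof.
  destruct (proj1 (part_cover _ _ _ W_part v) I) as [i Hi].
  exists i; apply (tour_elems _ _ _ (piece_tour_spec i)); auto.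
Qed.

Definition piece_index (v : V) : Z :=
  proj1_sig (constructive_indefinite_description _ (piece_index_exists v)).

Lemma in_piece_index v : In v (piece_tour (piece_index v)).
Proof. unfold piece_index; destruct (constructive_indefinite_description _ _); auto. Qed.

Definition tour_pos (v : V) : nat :=
  proj1_sig (constructive_indefinite_description _ (In_nth_error _ _ (in_piece_index v))).

Lemma tour_pos_spec v : nth_error (piece_tour (piece_index v)) (tour_pos v) = Some v.
Proof. unfold tour_pos; destruct (constructive_indefinite_description _ _); auto. Qed.

Definition coord (v : V) : Z := (offset tour_len (piece_index v) + Z.of_nat (tour_pos v))%Z.

Lemma piece_index_eq i k v : nth_error (piece_tour i) k = Some v -> piece_index v = i.
Proof.
  intros H; apply nth_error_In in H.
  apply (part_disjoint _ _ _ W_part (piece_index v) i v).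
  - apply (tour_elems _ _ _ (piece_tour_spec _)), in_piece_index.
  - apply (tour_elems _ _ _ (piece_tour_spec _)), H.
Qed.

Lemma coord_eq i k v : nth_error (piece_tour i) k = Some v -> coord v = (offset tour_len i + Z.of_nat k)%Z.
Proof.
  intros H; unfold coord; pose proof (piece_index_eq _ _ _ H) as E; rewrite E.
  pose proof (tour_pos_spec v) as Hp; rewrite E in Hp.
  pose proof (tour_nodup _ _ _ (piece_tour_spec i)) as Nd; rewrite NoDup_nth_error in Nd.
  rewrite (Nd (tour_pos v) k); auto; [apply nth_error_Some|]; congruence.
Qed.

Lemma coord_bounds v :
  (offset tour_len (piece_index v) <= coord v < offset tour_len (piece_index v + 1))%Z.
Proof.
  unfold coord; rewrite offset_succ; pose proof (tour_pos_spec v) as Hp.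
  assert (tour_pos v < length (piece_tour (piece_index v)))%nat
    by (apply nth_error_Some; congruence).
  unfold tour_len; lia.
Qed.

Lemma coord_inj u w : coord u = coord w -> u = w.
Proof.
  intros E; pose proof (coord_bounds u); pose proof (coord_bounds w).
  assert (Ei : piece_index u = piece_index w).
  { destruct (Z.lt_total (piece_index u) (piece_index w)) as [Hl|[Hl|Hl]]; auto.
    - pose proof (offset_le _ tour_len_pos (piece_index u + 1) (piece_index w) ltac:(lia)); lia.
    - pose proof (offset_le _ tour_len_pos (piece_index w + 1) (piece_index u) ltac:(lia)); lia. }
  unfold coord in E; rewrite Ei in E; assert (Ep : tour_pos u = tour_pos w) by lia.
  pose proof (tour_pos_spec u) as Pu; pose proof (tour_pos_spec w) as Pw.
  rewrite Ei, Ep in Pu; congruence.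
Qed.

Lemma coord_surj m : exists v, coord v = m.
Proof.
  destruct (offset_surj _ tour_len_pos m) as [i Hi]; rewrite offset_succ in Hi.
  set (k := Z.to_nat (m - offset tour_len i)).
  assert (El : tour_len i = Z.of_nat (length (piece_tour i))) by reflexivity.
  assert (Hk : (k < length (piece_tour i))%nat) by (unfold k; lia).
  apply nth_error_Some in Hk; destruct (nth_error (piece_tour i) k) as [v|] eqn:Hv; [|congruence].
  exists v; rewrite (coord_eq _ _ _ Hv); unfold k; lia.
Qed.

Definition vertex_at (m : Z) : V :=
  proj1_sig (constructive_indefinite_description _ (coord_surj m)).

Lemma coord_vertex_at m : coord (vertex_at m) = m.
Proof. unfold vertex_at; destruct (constructive_indefinite_description _ _); auto. Qed.

Lemma vertex_at_coord v : vertex_at (coord v) = v.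
Proof. apply coord_inj, coord_vertex_at. Qed.

(* Inside a tour steps have length 3; from the end of a tour to the start of the
   next, 1 back to the representative and then [K]. *)
Lemma vertex_at_step m : dist_le (vertex_at m) (vertex_at (m + 1)) (K + 4).
Proof.
  set (u := vertex_at m); set (i := piece_index u).
  pose proof (tour_pos_spec u) as Hp; fold i in Hp.
  assert (Hm : coord u = m) by apply coord_vertex_at.
  unfold coord in Hm; fold i in Hm.
  destruct (piece_tour_spec i) as [_ _ _ Hclose Hchain].
  destruct (nth_error (piece_tour i) (S (tour_pos u))) as [w|] eqn:Hw.
  - assert (Ew : vertex_at (m + 1) = w).
    { rewrite <- (vertex_at_coord w), (coord_eq _ _ _ Hw); f_equal; lia. }
    rewrite Ew; eapply dist_le_mono; [|eapply chain_nth; eauto]; lia.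
  - apply nth_error_None in Hw.
    assert (Hl : (tour_pos u < length (piece_tour i))%nat) by (apply nth_error_Some; congruence).
    assert (Hu : nth_error (piece_tour i) (length (piece_tour i) - 1) = Some u)
      by (replace (length (piece_tour i) - 1)%nat with (tour_pos u) by lia; auto).
    apply last_nth_error with (d := x i) in Hu.
    destruct (tour_head _ _ _ (piece_tour_spec (i + 1))) as [t Ht].
    assert (H0 : nth_error (piece_tour (i + 1)) 0 = Some (x (i + 1))) by (rewrite Ht; auto).
    assert (El : tour_len i = Z.of_nat (length (piece_tour i))) by reflexivity.
    assert (Ex : vertex_at (m + 1) = x (i + 1)).
    { rewrite <- (vertex_at_coord (x (i + 1))), (coord_eq _ _ _ H0), offset_succ
        by apply tour_len_pos.
      f_equal; lia. }
    rewrite Ex; apply (dist_le_mono _ _ (1 + K)); [lia|].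
    apply (dist_le_trans _ (x i)); [|apply x_step].
    rewrite <- Hu; exact Hclose.
Qed.

Lemma vertex_at_dist m (n : nat) : dist_le (vertex_at m) (vertex_at (m + Z.of_nat n)) ((K + 4) * n).
Proof.
  induction n as [|n IH]; [rewrite Z.add_0_r; apply dist_le_refl|].
  replace ((K + 4) * S n)%nat with ((K + 4) * n + (K + 4))%nat by lia.
  eapply dist_le_trans; [exact IH|].
  replace (m + Z.of_nat (S n))%Z with (m + Z.of_nat n + 1)%Z by lia. apply vertex_at_step.
Qed.

Lemma action_of_partition :
  exists act : V -> Z -> V, translation_like_Z adj act /\ transitive_action_Z act.
Proof.
  exists (fun v h => vertex_at (coord v + h)); split; [split; [|split]|].
  - split.
    + intros v; rewrite Z.add_0_r; apply vertex_at_coord.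
    + intros v g h; rewrite coord_vertex_at; f_equal; lia.
  - intros v h E; apply (f_equal coord) in E; rewrite coord_vertex_at in E; lia.
  - intros h; exists ((K + 4) * Z.to_nat (Z.abs h))%nat; intros v.
    destruct (Z.le_gt_cases 0 h) as [Hh|Hh].
    + pose proof (vertex_at_dist (coord v) (Z.to_nat h)) as G.
      rewrite vertex_at_coord, Z2Nat.id in G by lia.
      replace (Z.abs h) with h by lia; exact G.
    + pose proof (vertex_at_dist (coord v + h) (Z.to_nat (- h))) as G.
      rewrite Z2Nat.id in G by lia.
      replace (coord v + h + - h)%Z with (coord v) in G by lia; rewrite vertex_at_coord in G.
      replace (Z.abs h) with (- h)%Z by lia; apply dist_le_sym; exact G.
  - intros u w; exists (coord w - coord u)%Z.
    replace (coord u + (coord w - coord u))%Z with (coord w) by lia; apply vertex_at_coord.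
Qed.
End Assembly.

Lemma partition_ext {I} (P Q : V -> Prop) (C : I -> list V) c :
  (forall v, P v <-> Q v) -> partition P C c -> partition Q C c.
Proof. intros H [H1 H2 H3 H4 H5]; split; auto. intros v; rewrite <- H; auto. Qed.

Lemma partition_single (F : list V) r : NoDup F -> In r F -> connected_to F r ->
  partition (fun v => In v F) (fun _ : unit => F) (fun _ => r).
Proof.
  intros H1 H2 H3; split; auto.
  - intros [] [] _ _ _; auto.
  - intros v; split; [exists tt; auto|intros [_ H]; auto].
Qed.

Definition sum_family {I J A} (f : I -> A) (g : J -> A) (i : I + J) : A :=
  match i with inl a => f a | inr b => g b end.

Lemma partition_sum {I J} P Q (C : I -> list V) c (D : J -> list V) d :
  partition P C c -> partition Q D d -> (forall v, P v -> ~ Q v) ->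
  partition (fun v => P v \/ Q v) (sum_family C D) (sum_family c d).
Proof.
  intros [C1 C2 C3 C4 C5] [D1 D2 D3 D4 D5] HPQ; split.
  - intros [a|b]; simpl; auto.
  - intros [a|b]; simpl; auto.
  - intros [a|b]; simpl; auto.
  - intros [a|b] [a'|b'] v H H'; simpl in H, H'; f_equal; eauto.
    + exfalso; apply (HPQ v); [apply C5|apply D5]; eauto.
    + exfalso; apply (HPQ v); [apply C5|apply D5]; eauto.
  - intros v; rewrite C5, D5; split.
    + intros [[a H]|[b H]]; [exists (inl a)|exists (inr b)]; auto.
    + intros [[a|b] H]; [left|right]; eauto.
Qed.

Lemma partition_restrict {I J} P (C : I -> list V) c (f : J -> I) :
  (forall j j', f j = f j' -> j = j') -> partition P C c ->
  partition (fun v => exists j, In v (C (f j))) (fun j => C (f j)) (fun j => c (f j)).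
Proof. intros Hf [H1 H2 H3 H4 H5]; split; auto; try tauto. intros j j' v H H'; eauto. Qed.

Lemma partition_reindex {I J} P (C : I -> list V) c (f : J -> I) :
  (forall j j', f j = f j' -> j = j') -> (forall i, exists j, f j = i) -> partition P C c ->
  partition P (fun j => C (f j)) (fun j => c (f j)).
Proof.
  intros Hf Hs HP; apply (partition_ext (fun v => exists j, In v (C (f j)))).
  - intros v; rewrite (part_cover _ _ _ HP); split; [intros [j H]; eauto|].
    intros [i H]; destruct (Hs i) as [j <-]; eauto.
  - exact (partition_restrict P C c f Hf HP).
Qed.

(** * A finite core with two rays of pieces *)

Definition zsplit (i : Z) : unit + (nat + nat) :=
  match i with
  | Z0 => inl tt
  | Zpos p => inr (inl (Pos.to_nat p - 1)%nat)
  | Zneg p => inr (inr (Pos.to_nat p - 1)%nat)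
  end.

Lemma zsplit_pos j : zsplit (Z.of_nat (S j)) = inr (inl j).
Proof. simpl; rewrite SuccNat2Pos.id_succ; do 2 f_equal; lia. Qed.

Lemma zsplit_neg j : zsplit (- Z.of_nat (S j)) = inr (inr j).
Proof. simpl; rewrite SuccNat2Pos.id_succ; do 2 f_equal; lia. Qed.

Lemma zsplit_cases i : i = 0%Z \/ exists j, i = Z.of_nat (S j) \/ i = (- Z.of_nat (S j))%Z.
Proof.
  destruct (Z.lt_total i 0) as [H|[H|H]]; [|left; auto|];
    right; exists (Z.to_nat (Z.abs i) - 1)%nat; lia.
Qed.

Lemma zsplit_inj i i' : zsplit i = zsplit i' -> i = i'.
Proof.
  destruct i as [|p|p], i' as [|p'|p']; simpl; intros E; try discriminate; auto;
    injection E as E; f_equal; lia.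
Qed.

Lemma zsplit_surj a : exists i, zsplit i = a.
Proof.
  destruct a as [[]|[j|j]]; [exists 0%Z; auto|exists (Z.of_nat (S j))|exists (- Z.of_nat (S j))%Z].
  - apply zsplit_pos.
  - apply zsplit_neg.
Qed.

(* The finite core [fin_part full X] sits at 0, the pieces [L j] at the positive
   and the pieces [M j] at the negative integers. *)
Lemma action_of_core_and_rays (X : list V) r (PL PM : V -> Prop) L l M m K :
  connected_graph adj -> In r X -> connected_to X r ->
  partition PL L l -> partition PM M m ->
  (forall v, inf_part full X v <-> PL v \/ PM v) -> (forall v, PL v -> ~ PM v) ->
  dist_le r (l 0%nat) K -> dist_le r (m 0%nat) K ->
  (forall j, dist_le (l j) (l (S j)) K) -> (forall j, dist_le (m j) (m (S j)) K) ->
  exists act : V -> Z -> V, translation_like_Z adj act /\ transitive_action_Z act.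
Proof.
  intros Hconn Hr HX HL HM Hinf HLM Kl Km Kl' Km'.
  assert (Hf : finite_set (fin_part full X)).
  { apply fin_part_finite; intros v _; exists r; split; auto.
    apply connected_in_full; auto; exact I. }
  destruct (enum_set_spec _ Hf) as [Fnd Fsp].
  set (C := sum_family (fun _ : unit => enum_set (fin_part full X)) (sum_family L M)).
  set (c := sum_family (fun _ : unit => r) (sum_family l m)).
  apply (action_of_partition (fun i => C (zsplit i)) (fun i => c (zsplit i)) K).
  - apply partition_reindex; [exact zsplit_inj|exact zsplit_surj|].
    apply (partition_ext (fun v => fin_part full X v \/ (PL v \/ PM v))).
    { intros v; split; [intros _; exact I|intros _].
      rewrite <- Hinf; unfold fin_part, full; tauto. }
    apply partition_sum; [|apply partition_sum; auto|].
    + apply (partition_ext (fun v => In v (enum_set (fin_part full X)))); [exact Fsp|].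
      apply partition_single; auto.
      * apply Fsp; split; [exact I|intros H; exact (proj2 (inf_part_minus _ _ _ H) Hr)].
      * intros v Hv. eapply reach_in_ext; [intros z; symmetry; apply Fsp|].
        apply (fin_part_connected full X r); auto using connected_in_full.
        -- intros; exact I.
        -- apply Fsp, Hv.
    + intros v [_ Hv] H; apply Hv, Hinf; exact H.
  - intros i; destruct (zsplit_cases i) as [-> | [j [-> | ->]]].
    + exact Kl.
    + replace (Z.of_nat (S j) + 1)%Z with (Z.of_nat (S (S j))) by lia.
      unfold c; rewrite !zsplit_pos; apply Kl'.
    + destruct j as [|j].
      * replace (- Z.of_nat 1 + 1)%Z with 0%Z by lia.
        unfold c; rewrite zsplit_neg; apply dist_le_sym, Km.
      * replace (- Z.of_nat (S (S j)) + 1)%Z with (- Z.of_nat (S j))%Z by lia.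
        unfold c; rewrite !zsplit_neg; apply dist_le_sym, Km'.
Qed.

(** * Graphs with at most two ends *)

Section Ends.
Hypothesis Hconn : connected_graph adj.
Variable e : nat -> V.
Hypothesis e_surj : forall v, exists k, e k = v.

(* The pieces of a single ray, alternately sent to the positive and negative side. *)
Lemma one_ended_action (Hinf : infinite_type V) (Hoe : one_ended_in full) (r : V) :
  exists act : V -> Z -> V, translation_like_Z adj act /\ transitive_action_Z act.
Proof.
  destruct (seed_ray e e_surj (inf_part full [r]) r) as [W [x [HW [H0 Hstep]]]].
  { apply seed_inf_part; auto using connected_in_full. exact I. }
  assert (Heven : forall j j', (2 * j = 2 * j')%nat -> j = j') by lia.
  assert (Hodd : forall j j', (S (2 * j) = S (2 * j'))%nat -> j = j') by lia.
  apply (action_of_core_and_rays [r] r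
           (fun v => exists j, In v (W (2 * j)%nat)) (fun v => exists j, In v (W (S (2 * j))))
           (fun j => W (2 * j)%nat) (fun j => x (2 * j)%nat)
           (fun j => W (S (2 * j))) (fun j => x (S (2 * j))) 2); auto.
  - left; auto.
  - intros u [<-|[]]; apply reach_in_refl; left; auto.
  - exact (partition_restrict _ _ _ (fun j => 2 * j)%nat Heven HW).
  - exact (partition_restrict _ _ _ (fun j => S (2 * j)) Hodd HW).
  - intros v; rewrite (part_cover _ _ _ HW); split.
    + intros [k Hk]; destruct (Nat.Even_or_Odd k) as [[j ->]|[j ->]].
      * left; exists j; exact Hk.
      * right; exists j; rewrite Nat.add_1_r in Hk; exact Hk.
    + intros [[j Hj]|[j Hj]]; eauto.
  - intros v [j Hj] [j' Hj']; pose proof (part_disjoint _ _ _ HW _ _ _ Hj Hj'); lia.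
  - apply (dist_le_mono _ _ 1); [lia|apply dist_le_adj; auto].
  - exact (dist_le_adj2 _ _ _ H0 (Hstep 0%nat)).
  - intros j; replace (2 * S j)%nat with (S (S (2 * j))) by lia.
    apply (dist_le_adj2 _ _ _ (Hstep _) (Hstep _)).
  - intros j; replace (S (2 * S j)) with (S (S (S (2 * j)))) by lia.
    apply (dist_le_adj2 _ _ _ (Hstep _) (Hstep _)).
Qed.

Section Component.
Variables (X : list V) (u : V).
Let D := reach_in (minus full X) u.

Lemma component_minus_reach T a z :
  minus D T a -> reach_in (minus D T) a z <-> reach_in (minus full (X ++ T)) a z.
Proof.
  intros [Da Ta]; split; intros [n Hn]; exists n.
  - eapply walk_in_mono; [|exact Hn]. intros w [Dw Tw]; split; [exact I|].
    rewrite in_app_iff; intros [H|H]; [exact (proj2 (reach_in_end _ _ _ Dw) H)|exact (Tw H)].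
  - eapply walk_in_restrict; [exact Hn|]. intros w Hw; split.
    + eapply reach_in_trans; [exact Da|]. destruct Hw as [k Hk]; exists k.
      eapply walk_in_mono; [|exact Hk]. intros y [_ Hy]; split; [exact I|].
      intros H; apply Hy, in_or_app; auto.
    + intros H; apply (proj2 (reach_in_end _ _ _ Hw)), in_or_app; auto.
Qed.

(* With at most two ends, each of two distinct infinite components of [V - X]
   is one-ended: a second infinite component of [D - T] would give a third end. *)
Lemma component_one_ended (Hends : at_most_two_ends adj) w :
  inf_part full X u -> inf_part full X w -> ~ reach_in (minus full X) u w -> one_ended_in D.
Proof.
  intros Iu Iw Nuw T a b Ia Ib; apply NNPP; intros Nab.
  destruct (inf_part_exists (reach_in (minus full X) w) T (reach_in_connected _ _) Iw) as [c Ic].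
  pose proof (inf_part_minus _ _ _ Ia) as Ma; pose proof (inf_part_minus _ _ _ Ib) as Mb.
  pose proof (proj1 (inf_part_minus _ _ _ Ic)) as Dc.
  assert (Far : forall y, D y -> ~ reach_in (minus full (X ++ T)) y c).
  { intros y Dy Hyc; apply Nuw. eapply reach_in_trans; [exact Dy|].
    eapply reach_in_trans; [|apply reach_in_sym; exact Dc].
    destruct Hyc as [k Hk]; exists k; eapply walk_in_mono; [|exact Hk].
    intros z [_ Hz]; split; [exact I|intros H; apply Hz, in_or_app; auto]. }
  apply (two_ends_vertex_cut Hends (X ++ T) a b c).
  - eapply infinite_set_mono; [|exact Ia]; intros z; apply component_minus_reach; auto.
  - eapply infinite_set_mono; [|exact Ib]; intros z; apply component_minus_reach; auto.
  - eapply infinite_set_mono; [|exact Ic]; intros z [n Hn]; exists n.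
    eapply walk_in_mono; [|exact Hn]. intros y [Hy Ty]; split; [exact I|].
    rewrite in_app_iff; intros [H|H]; [exact (proj2 (reach_in_end _ _ _ Hy) H)|exact (Ty H)].
  - intros H; apply Nab, component_minus_reach; auto.
  - apply Far, Ma.
  - apply Far, Mb.
Qed.

Lemma component_seed (Hends : at_most_two_ends adj) r w : In r X ->
  inf_part full X u -> inf_part full X w -> ~ reach_in (minus full X) u w ->
  exists y, In y X /\ seed D y.
Proof.
  intros Hr Iu Iw Nuw.
  destruct (inf_part_boundary full X r (connected_in_full Hconn) Hr I u Iu)
    as [z [y [Iz [Hy [Hyz Huz]]]]].
  exists y; split; [exact Hy|split].
  - apply reach_in_connected.
  - exact Iu.
  - exact (component_one_ended Hends w Iu Iw Nuw).
  - intros H; exact (proj2 (reach_in_end _ _ _ H) Hy).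
  - exists z; split; auto.
Qed.
End Component.

Lemma ball_separates (Hnoe : ~ one_ended_in full) (r : V) : exists N u w,
  inf_part full (ball r N) u /\ inf_part full (ball r N) w /\ ~ reach_in (minus full (ball r N)) u w.
Proof.
  destruct (not_all_ex_not _ _ Hnoe) as [S HS].
  destruct (not_all_ex_not _ _ HS) as [u Hu]; destruct (not_all_ex_not _ _ Hu) as [w Hw].
  apply imply_to_and in Hw; destruct Hw as [Iu Hw]; apply imply_to_and in Hw; destruct Hw as [Iw Nuw].
  destruct (ball_covers Hconn S r) as [N HN]; set (X := ball r N).
  assert (Hsub : forall a b, reach_in (minus full X) a b -> reach_in (minus full S) a b).
  { intros a b [n Hn]; exists n; eapply walk_in_mono; [|exact Hn].
    intros z [_ Hz]; split; [exact I|intros H; apply Hz, HN, H]. }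
  assert (Hmove : forall u0, infinite_set (reach_in (minus full S) u0) ->
            exists u', reach_in (minus full S) u0 u' /\ inf_part full X u').
  { intros u0 I0. destruct (inf_part_exists _ X (reach_in_connected _ _) I0) as [u' Iu'].
    exists u'; split; [exact (proj1 (inf_part_minus _ _ _ Iu'))|].
    eapply infinite_set_mono; [|exact Iu']. intros z [n Hn]; exists n.
    eapply walk_in_mono; [|exact Hn]. intros y [_ Hy]; split; [exact I|exact Hy]. }
  destruct (Hmove u Iu) as [u' [Cu Iu']]; destruct (Hmove w Iw) as [w' [Cw Iw']].
  exists N, u', w'; split; [exact Iu'|split; [exact Iw'|]].
  intros H; apply Nuw. eapply reach_in_trans; [exact Cu|].
  eapply reach_in_trans; [apply Hsub, H|apply reach_in_sym, Cw].
Qed.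

Lemma two_ended_action (Hends : at_most_two_ends adj) (Hnoe : ~ one_ended_in full) (r : V) :
  exists act : V -> Z -> V, translation_like_Z adj act /\ transitive_action_Z act.
Proof.
  destruct (ball_separates Hnoe r) as [N [u' [w' [Iu' [Iw' Nuw']]]]]; set (X := ball r N).
  assert (Hsplit : forall v, inf_part full X v <->
            reach_in (minus full X) u' v \/ reach_in (minus full X) w' v).
  { intros v; split.
    - intros Iv; apply NNPP; intros Hn.
      apply (two_ends_vertex_cut Hends X v u' w').
      + exact Iv.
      + exact Iu'.
      + exact Iw'.
      + intros H; apply Hn; left; apply reach_in_sym, H.
      + intros H; apply Hn; right; apply reach_in_sym, H.
      + exact Nuw'.
    - intros [H|H]; [exact (inf_part_reach _ _ _ _ Iu' H)|exact (inf_part_reach _ _ _ _ Iw' H)]. }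
  assert (Hr : In r X) by apply ball_center.
  destruct (component_seed X u' Hends r w' Hr Iu' Iw' Nuw') as [yL [HyL SL]].
  destruct (component_seed X w' Hends r u' Hr Iw' Iu' (fun H => Nuw' (reach_in_sym _ _ _ H)))
    as [yM [HyM SM]].
  destruct (seed_ray e e_surj _ _ SL) as [WL [xL [PL [L0 Lstep]]]].
  destruct (seed_ray e e_surj _ _ SM) as [WM [xM [PM [M0 Mstep]]]].
  apply (action_of_core_and_rays X r _ _ WL xL WM xM (N + 1) Hconn Hr (ball_connected N r) PL PM Hsplit).
  - intros v H1 H2; apply Nuw'; eapply reach_in_trans; [exact H1|apply reach_in_sym, H2].
  - apply (dist_le_trans _ yL); [apply dist_in_ball, HyL|apply dist_le_adj, L0].
  - apply (dist_le_trans _ yM); [apply dist_in_ball, HyM|apply dist_le_adj, M0].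
  - intros j; apply (dist_le_mono _ _ 1); [lia|apply dist_le_adj, Lstep].
  - intros j; apply (dist_le_mono _ _ 1); [lia|apply dist_le_adj, Mstep].
Qed.
End Ends.

Lemma action_of_at_most_two_ends (Hconn : connected_graph adj) (Hinf : infinite_type V)
  (Hends : at_most_two_ends adj) :
  exists act : V -> Z -> V, translation_like_Z adj act /\ transitive_action_Z act.
Proof.
  destruct (infinite_set_inhabited _ Hinf) as [r _].
  destruct (vertex_enumeration Hconn r) as [e He].
  destruct (classic (one_ended_in full)) as [Hoe|Hnoe].
  - exact (one_ended_action Hconn e He Hinf Hoe r).
  - exact (two_ended_action Hconn e He Hends Hnoe r).
Qed.

(** * A transitive translation-like action of Z forces at most two ends *)

Definition endpoints (A : list (V * V)) : list V := flat_map (fun p => [fst p; snd p]) A.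

Lemma adj_minus_sym A x y : adj_minus adj A x y -> adj_minus adj A y x.
Proof. intros [H1 [H2 H3]]; split; auto. Qed.

Lemma component_trans A x y z :
  component (adj_minus adj A) x y -> component (adj_minus adj A) y z ->
  component (adj_minus adj A) x z.
Proof. intros [n Hn] [m Hm]; exists (n + m)%nat; eapply walk_app; eauto. Qed.

Lemma component_sym A x y :
  component (adj_minus adj A) x y -> component (adj_minus adj A) y x.
Proof. intros [n Hn]; exists n; apply walk_rev; auto using adj_minus_sym. Qed.

Lemma walk_avoiding A m x z : walk adj m x z ->
  (forall y, dist_le x y m -> ~ In y (endpoints A)) -> walk (adj_minus adj A) m x z.
Proof.
  assert (Hend : forall a b, In (a, b) A -> In a (endpoints A) /\ In b (endpoints A)).
  { intros a b H; unfold endpoints; rewrite !in_flat_map; split; eexists; split; eauto; simpl; auto. }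
  induction 1 as [x|n x y z Ha Hw IH]; intros H; [constructor|].
  assert (Hx : ~ In x (endpoints A)) by (apply H, dist_le_refl).
  assert (Hy : ~ In y (endpoints A)) by (apply H, (dist_le_mono _ _ 1); [lia|apply dist_le_adj; auto]).
  econstructor.
  - split; [exact Ha|split; intros Hin; apply Hx, (Hend _ _ Hin)].
  - apply IH; intros y' Hy'; apply H; replace (S n) with (1 + n)%nat by lia.
    eapply dist_le_trans; [apply dist_le_adj; exact Ha|exact Hy'].
Qed.

Section Orbit.
Variable act : V -> Z -> V.
Hypothesis act_tl : translation_like_Z adj act.
Hypothesis act_tr : transitive_action_Z act.
Variable x0 : V.

Lemma orbit_inj n m : act x0 n = act x0 m -> n = m.
Proof.
  destruct act_tl as [[H0 Hcomp] [Hfree _]]; intros E.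
  assert (E' : act (act x0 n) (- n) = act (act x0 m) (- n)) by (rewrite E; auto).
  rewrite !Hcomp, Z.add_opp_diag_r, H0 in E'. apply eq_sym, Hfree in E'; lia.
Qed.

Lemma orbit_index_bound (l : list V) : exists M : nat, forall n, In (act x0 n) l -> (Z.abs n <= Z.of_nat M)%Z.
Proof.
  induction l as [|z l [M HM]]; [exists 0%nat; intros n []|].
  destruct (act_tr x0 z) as [nz Hnz]; exists (Nat.max M (Z.to_nat (Z.abs nz))).
  intros n [Hn|Hn].
  - rewrite <- Hnz in Hn; apply orbit_inj in Hn; subst; lia.
  - specialize (HM n Hn); lia.
Qed.

Variable A : list (V * V).
Local Notation comp := (component (adj_minus adj A)).

(* Only finitely many orbit points come near the removed edges. *)
Lemma orbit_far_steps : exists M : nat, forall n,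
  (Z.of_nat M < Z.abs n)%Z -> comp (act x0 n) (act x0 (n + 1)).
Proof.
  destruct act_tl as [[_ Hcomp] [_ Hbd]].
  destruct (Hbd 1%Z) as [B HB]; destruct (finite_near (endpoints A) B) as [l Hl].
  destruct (orbit_index_bound l) as [M HM]; exists M; intros n Hn.
  destruct (HB (act x0 n)) as [k [Hk Hw]]; exists k; rewrite <- Hcomp.
  apply walk_avoiding; auto. intros y Hy Hin.
  assert (H : In (act x0 n) l) by (apply Hl; exists y; split; auto; eapply dist_le_mono; eauto).
  specialize (HM n H); lia.
Qed.

Section Tails.
Variable M : nat.
Hypothesis far_steps : forall n, (Z.of_nat M < Z.abs n)%Z -> comp (act x0 n) (act x0 (n + 1)).

Lemma orbit_tail_pos (k : nat) : comp (act x0 (Z.of_nat M + 1)) (act x0 (Z.of_nat M + 1 + Z.of_nat k)).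
Proof.
  induction k as [|k IH]; [rewrite Z.add_0_r; exists 0%nat; constructor|].
  eapply component_trans; [exact IH|].
  replace (Z.of_nat M + 1 + Z.of_nat (S k))%Z with (Z.of_nat M + 1 + Z.of_nat k + 1)%Z by lia.
  apply far_steps; lia.
Qed.

Lemma orbit_tail_neg (k : nat) : comp (act x0 (- Z.of_nat M - 1)) (act x0 (- Z.of_nat M - 1 - Z.of_nat k)).
Proof.
  induction k as [|k IH]; [rewrite Z.sub_0_r; exists 0%nat; constructor|].
  eapply component_trans; [exact IH|]. apply component_sym.
  replace (- Z.of_nat M - 1 - Z.of_nat k)%Z with (- Z.of_nat M - 1 - Z.of_nat (S k) + 1)%Z by lia.
  apply far_steps; lia.
Qed.

Lemma infinite_component_meets_tail x : infinite_set (comp x) ->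
  comp x (act x0 (Z.of_nat M + 1)) \/ comp x (act x0 (- Z.of_nat M - 1)).
Proof.
  intros Ix; apply NNPP; intros Hn; apply Ix.
  exists (map (fun k : nat => act x0 (Z.of_nat k - Z.of_nat M)) (seq 0 (2 * M + 1))).
  intros v Hv; destruct (act_tr x0 v) as [n <-].
  destruct (Z.le_gt_cases (Z.abs n) (Z.of_nat M)) as [Hle|Hgt].
  - apply in_map_iff; exists (Z.to_nat (n + Z.of_nat M)); split.
    + f_equal; lia.
    + apply in_seq; lia.
  - exfalso; apply Hn; destruct (Z.le_gt_cases 0 n).
    + left; eapply component_trans; [exact Hv|apply component_sym].
      pose proof (orbit_tail_pos (Z.to_nat (n - Z.of_nat M - 1))) as R.
      replace (Z.of_nat M + 1 + Z.of_nat (Z.to_nat (n - Z.of_nat M - 1)))%Z with n in R by lia.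
      exact R.
    + right; eapply component_trans; [exact Hv|apply component_sym].
      pose proof (orbit_tail_neg (Z.to_nat (- n - Z.of_nat M - 1))) as R.
      replace (- Z.of_nat M - 1 - Z.of_nat (Z.to_nat (- n - Z.of_nat M - 1)))%Z with n in R by lia.
      exact R.
Qed.
End Tails.
End Orbit.

Lemma at_most_two_ends_of_action act :
  translation_like_Z adj act -> transitive_action_Z act -> at_most_two_ends adj.
Proof.
  intros Htl Htr A x1 x2 x3 I1 I2 I3 N12 N13 N23.
  destruct (orbit_far_steps act Htl Htr x1 A) as [M HM].
  pose proof (infinite_component_meets_tail act Htr x1 A M HM) as Ht.
  destruct (Ht x1 I1) as [S1|S1], (Ht x2 I2) as [S2|S2], (Ht x3 I3) as [S3|S3];
    first [ apply N12; eapply component_trans; [exact S1|apply component_sym; exact S2]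
          | apply N13; eapply component_trans; [exact S1|apply component_sym; exact S3]
          | apply N23; eapply component_trans; [exact S2|apply component_sym; exact S3] ].
Qed.
End Graph.

Theorem corollary3p4 (V : Type) (adj : V -> V -> Prop)
  (Hsym : forall x y, adj x y -> adj y x)
  (Hirr : forall x, ~ adj x x)
  (Hconn : connected_graph adj)
  (Hinf : infinite_type V)
  (Hdeg : bounded_degree adj) :
  (exists act : V -> Z -> V,
      translation_like_Z adj act /\ transitive_action_Z act)
  <-> at_most_two_ends adj.
Proof.
  split.
  - intros [act [Htl Htr]]; exact (at_most_two_ends_of_action V adj Hsym Hdeg act Htl Htr).
  - exact (action_of_at_most_two_ends V adj Hsym Hdeg Hconn Hinf).
Qed.
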